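(* Let $\mathbb{F}$ be a field, $d\geq3$ and $V$ a vector space over $\mathbb{F}$ of dimension $d+1$. Let $E^*_0,\dots,E^*_d$ be a system of mutually orthogonal idempotents in $\mathrm{End}(V)$ and $A\in\mathrm{End}(V)$ with $E^*_iAE^*_j=0$ if $|i-j|>1$ and $E^*_iAE^*_j\neq0$ if $|i-j|=1$, with $A$ multiplicity-free and bipartite. Let $\theta^*_0,\dots,\theta^*_d\in\mathbb{F}$ be mutually distinct and $A^*=\sum_i\theta^*_iE^*_i$. Fix an integer $i$ with $3\le i\le d$ and assume that $\dfrac{\theta^*_j-\theta^*_{j-3}}{\theta^*_{j-1}-\theta^*_{j-2}}$ is independent of $j$ for $3\le j\le i$ (equivalently, that $\dfrac{\theta^*_j+\theta^*_{j-1}+\theta^*_{j-2}-\theta^*_h-\theta^*_{h-1}-\theta^*_{h-2}}{\theta^*_{j-1}-\theta^*_{h-1}}$ is independent of $j,h$ for $2\le h<j\le i$). Then $$\frac{\theta^*_{i-2}-\theta^*_2}{\theta^*_{i-1}-\theta^*_1}=\frac{\theta^*_{i-1}-\theta^*_3}{\theta^*_i-\theta^*_2}.$$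
   Context: A system of mutually orthogonal idempotents: $E^*_iE^*_j=\delta_{ij}E^*_i$, $\operatorname{rank}E^*_i=1$. $A$ multiplicity-free: $d+1$ distinct eigenvalues in $\mathbb{F}$. Bipartite: $\operatorname{tr}(E^*_iA)=0$ for all $i$. *)

From HB Require Import structures.
From mathcomp Require Import all_boot all_order all_algebra.
Set Implicit Arguments. Unset Strict Implicit. Unset Printing Implicit Defensive.
Import Order.TTheory GRing.Theory Num.Theory.
Local Open Scope ring_scope.

(* End(V) for dim V = d+1 is modelled as 'M[F]_(d.+1); indices run over 0..d (nat). *)

Definition orth_idempotents (F : fieldType) (d : nat) (E : nat -> 'M[F]_(d.+1)) :=
  (forall i j, (i <= d)%N -> (j <= d)%N ->
     E i *m E j = if i == j then E i else 0) /\
  (forall i, (i <= d)%N -> \rank (E i) = 1%N).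

Definition multiplicity_free (F : fieldType) (d : nat) (A : 'M[F]_(d.+1)) :=
  exists th : 'I_(d.+1) -> F, injective th /\ forall k, eigenvalue A (th k).

Definition bipartite (F : fieldType) (d : nat) (E : nat -> 'M[F]_(d.+1))
  (A : 'M[F]_(d.+1)) := forall i, (i <= d)%N -> \tr (E i *m A) = 0.

Definition tridiag_wrt (F : fieldType) (d : nat) (E : nat -> 'M[F]_(d.+1))
  (A : 'M[F]_(d.+1)) :=
  (forall i j, (i <= d)%N -> (j <= d)%N -> (i.+1 < j)%N \/ (j.+1 < i)%N ->
     E i *m A *m E j = 0) /\
  (forall i j, (i <= d)%N -> (j <= d)%N -> (i.+1 == j) || (j.+1 == i) ->
     E i *m A *m E j != 0).

Definition dual_op (F : fieldType) (d : nat) (th : nat -> F)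
  (E : nat -> 'M[F]_(d.+1)) : 'M[F]_(d.+1) :=
  \sum_(0 <= k < d.+1) th k *: E k.

From HB Require Import structures.
From mathcomp Require Import all_boot all_order all_algebra.
From mathcomp Require Import zify ring.
Import Order.TTheory GRing.Theory Num.Theory.
Set Implicit Arguments. Unset Strict Implicit. Unset Printing Implicit Defensive.
Local Open Scope ring_scope.

(* The ratio condition says that th satisfies the linear recurrence
   th_(k+3) - th_k = b (th_(k+2) - th_(k+1)).  Summing it gives the conserved
   linear quantity kappa = th_(k+2) + th_(k+1) + th_k - b th_(k+1), hence the
   second-order recurrence th_(k+2) = (b - 1) th_(k+1) + kappa - th_k, which in
   turn conserves the quadratic quantity
   th_(k+2) th_k - th_(k+1)^2 + kappa th_(k+1).
   Cross-multiplied, the claimed identity is the equality of this quadratic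
   invariant at k = 1 and k = i - 2. *)

Section ThirdOrderRecurrence.

Variables (R : comPzRingType) (f : nat -> R) (b : R) (n : nat).

Hypothesis recf : forall k, (k.+3 <= n)%N -> f k.+3 - f k = b * (f k.+2 - f k.+1).

Definition linear_invariant k := f k.+2 + f k.+1 + f k - b * f k.+1.

Lemma linear_invariantE k : (k.+2 <= n)%N -> linear_invariant k = linear_invariant 0.
Proof.
elim: k => [//|k IHk hk]; rewrite -(IHk (ltnW hk)) /linear_invariant.
have -> : f k.+3 = f k + b * (f k.+2 - f k.+1) by rewrite -(recf hk); ring.
ring.
Qed.

Lemma second_order_rec k : (k.+2 <= n)%N ->
  f k.+2 = (b - 1) * f k.+1 + linear_invariant 0 - f k.
Proof. by move=> hk; rewrite -(linear_invariantE hk) /linear_invariant; ring. Qed.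

Definition quadratic_invariant k :=
  f k.+2 * f k - f k.+1 ^+ 2 + linear_invariant 0 * f k.+1.

Lemma quadratic_invariantE k : (k.+2 <= n)%N ->
  quadratic_invariant k = quadratic_invariant 0.
Proof.
elim: k => [//|k IHk hk]; rewrite -(IHk (ltnW hk)) /quadratic_invariant.
by rewrite (second_order_rec hk) (second_order_rec (ltnW hk)); ring.
Qed.

Lemma cross_product_rec m : (m.+3 <= n)%N ->
  (f m.+1 - f 2) * (f m.+3 - f 2) = (f m.+2 - f 3) * (f m.+2 - f 1).
Proof.
move=> hm; apply/eqP; rewrite -subr_eq0.
have -> : (f m.+1 - f 2) * (f m.+3 - f 2) - (f m.+2 - f 3) * (f m.+2 - f 1)
    = quadratic_invariant m.+1 - quadratic_invariant 1.
  rewrite /quadratic_invariant (second_order_rec hm) (second_order_rec (k := 1)) //; [ring | lia].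
by rewrite (quadratic_invariantE hm) quadratic_invariantE ?subrr //; lia.
Qed.

End ThirdOrderRecurrence.

Theorem lemma9p3 (F : fieldType) (d : nat) (E : nat -> 'M[F]_(d.+1))
  (A : 'M[F]_(d.+1)) (th : nat -> F) (i : nat) :
  (3 <= d)%N ->
  orth_idempotents E ->
  tridiag_wrt E A ->
  multiplicity_free A ->
  bipartite E A ->
  (forall j k, (j <= d)%N -> (k <= d)%N -> th j = th k -> j = k) ->
  let Astar := dual_op th E in
  (3 <= i <= d)%N ->
  (exists beta : F, forall j, (3 <= j <= i)%N ->
     (th j - th (j - 3)%N) / (th (j - 1)%N - th (j - 2)%N) = beta) ->
  (th (i - 2)%N - th 2%N) / (th (i - 1)%N - th 1%N)
    = (th (i - 1)%N - th 3%N) / (th i - th 2%N).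
Proof.
move=> _ _ _ _ _ th_inj _ /andP[i_ge3 i_le_d] [b hb].
have th_sub_neq0 j k : (j <= d)%N -> (k <= d)%N -> j <> k -> th j - th k != 0.
  by move=> hj hk hjk; rewrite subr_eq0; apply/eqP => /th_inj-/(_ hj hk).
have rec_th k : (k.+3 <= i)%N -> th k.+3 - th k = b * (th k.+2 - th k.+1).
  move=> hk; have := hb k.+3; rewrite !subSS !subn0 => <-; last by rewrite hk.
  by rewrite divfK //; apply: th_sub_neq0; lia.
case: i hb i_ge3 i_le_d rec_th => [|[|[|m]]] // _ _ hm rec_th.
rewrite !subSS !subn0.
apply/eqP; rewrite eqr_div ?th_sub_neq0 //; try lia.
exact/eqP/(cross_product_rec rec_th (leqnn m.+3)).
Qed.
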